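(* The special monoid $\Pi_2=\langle a,b,c\mid (ab^ic)^2=1\ (i\geq 1)\rangle$ has context-free word problem, and its group of units is not finitely generated.
   Context: For a monoid $M$ with finite generating set $A$, the word problem of $M$ with respect to $A$ is the language $\{u\#v^{\mathrm{rev}} \mid u,v\in A^\ast,\ u=_M v\}$, where $\#\notin A$ and $v^{\mathrm{rev}}$ is the reversal of $v$; $M$ has context-free word problem if this language is context-free. The group of units of $M$ is the set of elements having both a left and a right inverse. A monoid is special if it has a presentation in which all defining relations are of the form $w=1$. *)

From Stdlib Require Import List.
Import ListNotations.

Inductive gen : Type := ga | gb | gc.

Definition word := list gen.

Definition abic (i : nat) : word := [ga] ++ repeat gb i ++ [gc].

Inductive pi2_rel : word -> word -> Prop :=
| pi2_rel_intro (i : nat) : 1 <= i -> pi2_rel (abic i ++ abic i) [].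

Inductive pi2_eq : word -> word -> Prop :=
| pi2_refl u : pi2_eq u u
| pi2_step u v l r : pi2_rel l r -> pi2_eq (u ++ l ++ v) (u ++ r ++ v)
| pi2_sym u v : pi2_eq u v -> pi2_eq v u
| pi2_trans u v w : pi2_eq u v -> pi2_eq v w -> pi2_eq u w.

Definition pi2_unit (u : word) : Prop :=
  (exists v, pi2_eq (v ++ u) []) /\ (exists v, pi2_eq (u ++ v) []).

Definition inverse_of_some (S : list word) (w : word) : Prop :=
  exists s, In s S /\ pi2_eq (s ++ w) [] /\ pi2_eq (w ++ s) [].

Definition pi2_units_fin_gen : Prop :=
  exists S : list word,
    (forall s, In s S -> pi2_unit s) /\
    (forall x, pi2_unit x ->
       exists ws : list word,
         (forall w, In w ws -> In w S \/ inverse_of_some S w) /\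
         pi2_eq x (concat ws)).

Record cfg (T : Type) : Type := CFG {
  cfg_prods : list (nat * list (nat + T));
  cfg_start : nat
}.

Arguments cfg_prods {T} _.
Arguments cfg_start {T} _.

Inductive derives {T : Type} (G : cfg T) : list (nat + T) -> list T -> Prop :=
| der_nil : derives G [] []
| der_term t s w : derives G s w -> derives G (inr t :: s) (t :: w)
| der_nt X rhs s w1 w2 :
    In (X, rhs) (cfg_prods G) -> derives G rhs w1 -> derives G s w2 ->
    derives G (inl X :: s) (w1 ++ w2).

Definition cfg_lang {T : Type} (G : cfg T) (w : list T) : Prop :=
  derives G [inl (cfg_start G)] w.

Definition context_free {T : Type} (L : list T -> Prop) : Prop :=
  exists G : cfg T, forall w, L w <-> cfg_lang G w.

(** The word problem of Pi_2 w.r.t. {a,b,c}, over the alphabet {a,b,c,#}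
    where [None] plays the role of #:  { u # v^rev | u =_{Pi_2} v }. *)
Definition pi2_word_problem (w : list (option gen)) : Prop :=
  exists u v : word,
    w = map Some u ++ None :: map Some (rev v) /\ pi2_eq u v.

(** Both halves rest on a normal form, computed by a stack machine that reads
    a word letter by letter and deletes a relator [(a b^j c)^2] as soon as its
    last letter arrives.  Its output [nf w] contains no relator, is reached from [w] by
    deleting relators, and is invariant under the defining relations; hence
    [u = v] in Pi_2 iff [nf u = nf v].

    Context-freeness: [u] is a "padding" of [nf u] (balanced words, i.e. nested
    products of relators, inserted into the gaps).  A grammar whose start symbol
    generates [u # rev v] for paddings [u], [v] of a common word captures the
    word problem; soundness is checked by giving each nonterminal a meaning.

    Units: if [x] is invertible on both sides, the machine run on [w nf(x)] and
    on [nf(x) nf(w)] shows that [nf x] is a product of proper suffixes and also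
    of proper prefixes of relators, hence a product of blocks [a b^j c].  The
    units generated by finitely many units of length [< N] are products of
    blocks with [j < N], and the machine shows [a b^N c] is not such a product. *)

From Stdlib Require Import List Lia.
Import ListNotations.

Ltac list_norm :=
  repeat progress (simpl; rewrite ?rev_app_distr, ?rev_repeat, <- ?app_assoc).

Definition relator (j : nat) : word := abic j ++ abic j.
Arguments relator : simpl never.

Lemma pi2_eq_context u v : pi2_eq u v -> forall x y, pi2_eq (x ++ u ++ y) (x ++ v ++ y).
Proof.
  induction 1 as [u|u v l r Hlr|u v _ IH|u v w _ IH1 _ IH2]; intros x y.
  - apply pi2_refl.
  - replace (x ++ (u ++ l ++ v) ++ y) with ((x ++ u) ++ l ++ v ++ y) by (rewrite <- !app_assoc; reflexivity).
    replace (x ++ (u ++ r ++ v) ++ y) with ((x ++ u) ++ r ++ v ++ y) by (rewrite <- !app_assoc; reflexivity).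
    now apply pi2_step.
  - now apply pi2_sym.
  - eapply pi2_trans; eauto.
Qed.

Lemma pi2_eq_app u u' v v' : pi2_eq u u' -> pi2_eq v v' -> pi2_eq (u ++ v) (u' ++ v').
Proof.
  intros Hu Hv. apply pi2_trans with (u' ++ v).
  - exact (pi2_eq_context u u' Hu [] v).
  - pose proof (pi2_eq_context v v' Hv u' []) as H. now rewrite !app_nil_r in H.
Qed.

Lemma pi2_eq_cons x u v : pi2_eq u v -> pi2_eq (x :: u) (x :: v).
Proof. intros H. exact (pi2_eq_app [x] [x] u v (pi2_refl _) H). Qed.

Lemma relator_trivial j : 1 <= j -> pi2_eq (relator j) [].
Proof.
  intros Hj. pose proof (pi2_step [] [] _ _ (pi2_rel_intro j Hj)) as H.
  now rewrite app_nil_r in H.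
Qed.

Lemma repeat_cons_inj (x y : gen) n m X Y :
  x <> y -> repeat y n ++ x :: X = repeat y m ++ x :: Y -> n = m /\ X = Y.
Proof.
  intros Hxy. revert m. induction n as [|n IH]; intros [|m] H; simpl in H; inversion H; subst.
  - auto.
  - congruence.
  - congruence.
  - destruct (IH m H1) as [-> ->]. auto.
Qed.

Lemma abic_app j X : abic j ++ X = ga :: repeat gb j ++ gc :: X.
Proof. unfold abic. simpl. now rewrite <- app_assoc. Qed.

Lemma rev_app_abic X j : rev (X ++ abic j) = gc :: repeat gb j ++ ga :: rev X.
Proof.
  unfold abic. rewrite !rev_app_distr, rev_repeat. simpl. now rewrite <- app_assoc.
Qed.

Lemma abic_prefix_inj j j' X Y : abic j ++ X = abic j' ++ Y -> j = j' /\ X = Y.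
Proof.
  rewrite !abic_app. intros H. inversion H as [H1].
  apply repeat_cons_inj in H1; [tauto | discriminate].
Qed.

Lemma abic_suffix_inj X Y j j' : X ++ abic j = Y ++ abic j' -> X = Y /\ j = j'.
Proof.
  intros H. apply (f_equal (@rev gen)) in H. rewrite !rev_app_abic in H. inversion H as [H1].
  apply repeat_cons_inj in H1 as [-> HXY]; [|discriminate].
  split; [|reflexivity]. now rewrite <- (rev_involutive X), HXY, rev_involutive.
Qed.

Lemma length_abic j : length (abic j) = j + 2.
Proof. unfold abic. rewrite !length_app, repeat_length. simpl. lia. Qed.

(** * A normal form computed by a stack machine *)

(** Words are read left to right and pushed onto a stack (the reversed word read
    so far).  Reading [c] on top of the reversal of [(relator j)] minus its final
    [c] pops that occurrence of the relator.  All stack operations below work on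
    reversed words. *)

Fixpoint count_b (l : word) : nat * word :=
  match l with
  | gb :: t => let (n, r) := count_b t in (S n, r)
  | _ => (0, l)
  end.

Fixpoint drop_b (n : nat) (l : word) : option word :=
  match n, l with
  | 0, l => Some l
  | S n, gb :: t => drop_b n t
  | _, _ => None
  end.

(** The reversal of [(relator j)] without its final [c], on top of the stack [r]. *)
Definition relator_on_stack (j : nat) (r : word) : word :=
  repeat gb j ++ ga :: gc :: repeat gb j ++ ga :: r.

Definition pop_relator (rs : word) : option word :=
  let (j, r) := count_b rs in
  match j, r with
  | S _, ga :: gc :: r2 =>
      match drop_b j r2 with Some (ga :: r3) => Some r3 | _ => None end
  | _, _ => None
  end.

Definition push (rs : word) (x : gen) : word :=
  match x with
  | gc => match pop_relator rs with Some r => r | None => gc :: rs end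
  | _ => x :: rs
  end.

Definition stack_of (w : word) : word := fold_left push w [].

Definition nf (w : word) : word := rev (stack_of w).

Lemma count_b_spec l n r : count_b l = (n, r) -> l = repeat gb n ++ r.
Proof.
  revert n r. induction l as [|[] l IH]; simpl; intros n r H; try now inversion H.
  destruct (count_b l) as [n0 r0]. inversion H; subst. now rewrite (IH n0 r eq_refl).
Qed.

Lemma count_b_repeat n x t : x <> gb -> count_b (repeat gb n ++ x :: t) = (n, x :: t).
Proof.
  intros Hx. induction n as [|n IH]; simpl.
  - now destruct x.
  - now rewrite IH.
Qed.

Lemma drop_b_spec n l r : drop_b n l = Some r -> l = repeat gb n ++ r.
Proof.
  revert l. induction n as [|n IH]; simpl; intros l H.
  - now inversion H.
  - destruct l as [|[] l]; try discriminate. now rewrite (IH l H).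
Qed.

Lemma drop_b_repeat n r : drop_b n (repeat gb n ++ r) = Some r.
Proof. induction n; simpl; auto. Qed.

Lemma pop_relator_spec rs r :
  pop_relator rs = Some r -> exists j, 1 <= j /\ rs = relator_on_stack j r.
Proof.
  unfold pop_relator. destruct (count_b rs) as [n r0] eqn:E.
  apply count_b_spec in E as ->.
  destruct n as [|n]; [discriminate|].
  destruct r0 as [|[] [|[] r2]]; try discriminate.
  destruct (drop_b (S n) r2) as [[|[] l]|] eqn:E2; try discriminate.
  intros H. inversion H; subst. apply drop_b_spec in E2 as ->.
  exists (S n). split; [lia | reflexivity].
Qed.

Lemma pop_relator_on_stack j r : 1 <= j -> pop_relator (relator_on_stack j r) = Some r.
Proof.
  intros Hj. unfold pop_relator, relator_on_stack.
  rewrite count_b_repeat by discriminate.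
  destruct j as [|j]; [lia|]. now rewrite drop_b_repeat.
Qed.

Definition relator_body (j : nat) : word := abic j ++ ga :: repeat gb j.

Lemma relator_split j : relator j = relator_body j ++ [gc].
Proof. unfold relator, relator_body, abic. now rewrite <- !app_assoc. Qed.

Lemma rev_relator_on_stack j r : rev (relator_on_stack j r) = rev r ++ relator_body j.
Proof.
  unfold relator_on_stack, relator_body, abic. list_norm. reflexivity.
Qed.

Lemma push_abic j rs : fold_left push (abic j) rs =
  match pop_relator (repeat gb j ++ ga :: rs) with
  | Some r => r
  | None => gc :: repeat gb j ++ ga :: rs
  end.
Proof.
  assert (Hb : forall n s, fold_left push (repeat gb n) s = repeat gb n ++ s).
  { induction n as [|n IH]; intros s; simpl; auto.
    rewrite IH, app_comm_cons, repeat_cons, <- app_assoc. reflexivity. }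
  unfold abic. rewrite !fold_left_app. simpl. now rewrite Hb.
Qed.

Lemma pop_after_abic j rs r : pop_relator (repeat gb j ++ ga :: rs) = Some r ->
  rs = gc :: repeat gb j ++ ga :: r.
Proof.
  intros H. apply pop_relator_spec in H as (j' & _ & E). unfold relator_on_stack in E.
  now apply repeat_cons_inj in E as [-> [= ->]].
Qed.

Definition irreducible (z : word) : Prop :=
  forall p q j, 1 <= j -> z <> p ++ relator j ++ q.

Lemma irreducible_prefix z z' : irreducible (z ++ z') -> irreducible z.
Proof.
  intros H p q j Hj E. apply (H p (q ++ z') j Hj). rewrite E. now rewrite <- !app_assoc.
Qed.

Lemma irreducible_snoc z x : irreducible z ->
  (forall p j, 1 <= j -> z ++ [x] <> p ++ relator j) -> irreducible (z ++ [x]).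
Proof.
  intros Hz Hend p q j Hj E. destruct q as [|y q] using rev_ind.
  - rewrite app_nil_r in E. exact (Hend p j Hj E).
  - rewrite !app_assoc in E. apply app_inj_tail in E as [E _].
    apply (Hz p q j Hj). now rewrite E, <- !app_assoc.
Qed.

Lemma push_irreducible rs x : irreducible (rev rs) -> irreducible (rev (push rs x)).
Proof.
  intros H. unfold push.
  destruct x; [| |destruct (pop_relator rs) as [r|] eqn:E].
  1,2: simpl; apply irreducible_snoc; auto; intros p j _ Eq;
       rewrite relator_split, app_assoc in Eq; now apply app_inj_tail in Eq as [_ ?].
  - apply pop_relator_spec in E as (j & _ & ->).
    rewrite rev_relator_on_stack in H. exact (irreducible_prefix _ _ H).
  - simpl. apply irreducible_snoc; auto. intros p j Hj Eq.
    rewrite relator_split, app_assoc in Eq. apply app_inj_tail in Eq as [Eq _].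
    assert (rs = relator_on_stack j (rev p)) as Ers.
    { apply rev_inj. now rewrite rev_relator_on_stack, rev_involutive. }
    rewrite Ers, pop_relator_on_stack in E by exact Hj. discriminate.
Qed.

Lemma stack_irreducible w rs : irreducible (rev rs) -> irreducible (rev (fold_left push w rs)).
Proof.
  revert rs. induction w as [|x w IH]; simpl; intros rs H; auto.
  apply IH, push_irreducible, H.
Qed.

Lemma nf_irreducible w : irreducible (nf w).
Proof.
  apply stack_irreducible. intros p q j _ E. destruct p; discriminate.
Qed.

Lemma stack_of_app u v : stack_of (u ++ v) = fold_left push v (stack_of u).
Proof. apply fold_left_app. Qed.

Lemma push_relator j rs : 1 <= j -> irreducible (rev rs) -> fold_left push (relator j) rs = rs.
Proof.
  intros Hj Hirr. unfold relator. rewrite fold_left_app, (push_abic j rs).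
  destruct (pop_relator (repeat gb j ++ ga :: rs)) as [r|] eqn:E.
  - apply pop_after_abic in E as ->. rewrite push_abic.
    destruct (pop_relator (repeat gb j ++ ga :: r)) as [r'|] eqn:E2; auto.
    apply pop_after_abic in E2 as ->. exfalso.
    apply (Hirr (rev r') [] j Hj).
    change (rev (gc :: relator_on_stack j r') = rev r' ++ relator j ++ []).
    change (rev (gc :: ?l)) with (rev l ++ [gc]).
    rewrite rev_relator_on_stack, app_nil_r, relator_split. now rewrite <- app_assoc.
  - rewrite push_abic. change (repeat gb j ++ ga :: gc :: repeat gb j ++ ga :: rs)
      with (relator_on_stack j rs).
    now rewrite pop_relator_on_stack.
Qed.

Lemma nf_invariant u v : pi2_eq u v -> nf u = nf v.
Proof.
  induction 1 as [u|u v l r Hlr| |]; try congruence.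
  destruct Hlr as [i Hi]. unfold nf. f_equal.
  rewrite !stack_of_app, fold_left_app.
  change (abic i ++ abic i) with (relator i).
  rewrite push_relator; auto. apply nf_irreducible.
Qed.

Inductive reduces : word -> word -> Prop :=
| reduces_refl u : reduces u u
| reduces_delete x y j z : 1 <= j -> reduces (x ++ y) z -> reduces (x ++ relator j ++ y) z.

Lemma reduces_stack w rs : reduces (rev rs ++ w) (rev (fold_left push w rs)).
Proof.
  revert rs. induction w as [|x w IH]; intros rs; simpl.
  - rewrite app_nil_r. constructor.
  - assert (Hpush : reduces (rev (x :: rs) ++ w) (rev (fold_left push w (x :: rs)))) by apply IH.
    simpl in Hpush. rewrite <- app_assoc in Hpush.
    unfold push at 2. destruct x; auto.
    destruct (pop_relator rs) as [r|] eqn:E; auto.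
    apply pop_relator_spec in E as (j & Hj & ->).
    replace (rev (relator_on_stack j r) ++ gc :: w) with (rev r ++ relator j ++ w).
    + now apply reduces_delete.
    + rewrite rev_relator_on_stack, relator_split. now rewrite <- !app_assoc.
Qed.

Lemma reduces_nf w : reduces w (nf w).
Proof. exact (reduces_stack w []). Qed.

Lemma reduces_pi2_eq u z : reduces u z -> pi2_eq u z.
Proof.
  induction 1 as [|x y j z Hj _ IH]; [apply pi2_refl|].
  apply pi2_trans with (x ++ y); auto.
  exact (pi2_eq_context _ _ (relator_trivial j Hj) x y).
Qed.

Lemma reduces_length u z : reduces u z -> length z <= length u.
Proof. induction 1; auto. rewrite !length_app in *. lia. Qed.

Lemma pi2_eq_nf w : pi2_eq w (nf w).
Proof. apply reduces_pi2_eq, reduces_nf. Qed.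

Lemma nf_idempotent w : nf (nf w) = nf w.
Proof. symmetry. apply nf_invariant, pi2_eq_nf. Qed.

(** * The word problem is context-free *)

(** [balanced w]: [w] is a concatenation of relators, each padded by balanced
    words.  [padding s w]: [w] is [s] with a balanced word inserted into each of
    its [length s + 1] gaps.  Balanced words are exactly the words the grammar
    below derives from its nonterminal [E]. *)
Inductive balanced : word -> Prop :=
| balanced_nil : balanced []
| balanced_block j w1 w2 :
    1 <= j -> padding (relator j) w1 -> balanced w2 -> balanced (w1 ++ w2)
with padding : word -> word -> Prop :=
| padding_nil e : balanced e -> padding [] e
| padding_cons t s e w : balanced e -> padding s w -> padding (t :: s) (e ++ t :: w).

Scheme balanced_ind2 := Induction for balanced Sort Prop
with padding_ind2 := Induction for padding Sort Prop.
Combined Scheme balanced_padding_ind from balanced_ind2, padding_ind2.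

Lemma padding_refl s : padding s s.
Proof.
  induction s as [|t s IH]; repeat constructor.
  exact (padding_cons t s [] s balanced_nil IH).
Qed.

Lemma insert_relator i : 1 <= i ->
  (forall w, balanced w -> forall x y, w = x ++ y -> balanced (x ++ relator i ++ y)) /\
  (forall s w, padding s w -> forall x y, w = x ++ y -> padding s (x ++ relator i ++ y)).
Proof.
  intros Hi. apply balanced_padding_ind.
  - intros x y H. symmetry in H. apply app_eq_nil in H as [-> ->].
    change (balanced (relator i ++ [])).
    apply (balanced_block i); auto using padding_refl, balanced_nil.
  - intros j w1 w2 Hj P1 IH1 B2 IH2 x y H.
    apply app_eq_app in H as [l [[-> ->]|[-> ->]]].
    + rewrite (app_assoc (relator i)), app_assoc. apply (balanced_block j); auto.
    + rewrite <- app_assoc. apply (balanced_block j); auto.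
  - intros e _ IH x y H. constructor. now apply IH.
  - intros t s e w Be IHe Ps IHs x y H.
    apply app_eq_app in H as [l [[-> ->]|[-> H]]].
    + rewrite (app_assoc (relator i)), app_assoc. constructor; auto.
    + destruct l as [|z l]; simpl in H; inversion H; subst.
      * rewrite app_nil_r, app_assoc. constructor; auto.
        rewrite <- (app_nil_r (relator i)). apply IHe. now rewrite app_nil_r.
      * rewrite <- app_assoc, <- app_comm_cons. constructor; auto.
Qed.

Lemma reduces_padding u z : reduces u z -> padding z u.
Proof.
  induction 1 as [u|x y j z Hj _ IH]; [apply padding_refl|].
  exact (proj2 (insert_relator j Hj) _ _ IH x y eq_refl).
Qed.

Lemma padding_nf u : padding (nf u) u.
Proof. apply reduces_padding, reduces_nf. Qed.

Definition sym := (nat + option gen)%type.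
Definition N (k : nat) : sym := inl k.
Definition T (x : gen) : sym := inr (Some x).
Definition hash : sym := inr None.

(** Nonterminals: [0] = [S] (start), [1] = [E] (balanced words),
    [2] = [Z] (paddings of [b^j c a b^j], [j >= 1]), and their mirror images
    [3] = [E'], [4] = [Z'] generating the reversed words.  [S] derives
    [u # rev v] for paddings [u], [v] of one and the same word. *)
Definition prods : list (nat * list sym) :=
  [ (0, [N 1; hash; N 3]);
    (0, [N 1; T ga; N 0; T ga; N 3]);
    (0, [N 1; T gb; N 0; T gb; N 3]);
    (0, [N 1; T gc; N 0; T gc; N 3]);
    (1, []);
    (1, [N 1; T ga; N 2; T gc; N 1; N 1]);
    (2, [N 1; T gb; N 2; T gb; N 1]);
    (2, [N 1; T gb; N 1; T gc; N 1; T ga; N 1; T gb; N 1]);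
    (3, []);
    (3, [N 3; N 3; T gc; N 4; T ga; N 3]);
    (4, [N 3; T gb; N 4; T gb; N 3]);
    (4, [N 3; T gb; N 3; T ga; N 3; T gc; N 3; T gb; N 3]) ].

Definition G : cfg (option gen) := CFG _ prods 0.

Lemma derives_app s1 s2 w1 w2 :
  derives G s1 w1 -> derives G s2 w2 -> derives G (s1 ++ s2) (w1 ++ w2).
Proof.
  intros H. revert s2 w2. induction H; intros; simpl; auto.
  - constructor; auto.
  - rewrite <- app_assoc. econstructor; eauto.
Qed.

Lemma derives_app_inv s1 s2 w : derives G (s1 ++ s2) w ->
  exists w1 w2, w = w1 ++ w2 /\ derives G s1 w1 /\ derives G s2 w2.
Proof.
  revert w. induction s1 as [|x s1 IH]; simpl; intros w H.
  - exists [], w. repeat split; auto. constructor.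
  - inversion H as [|t s w' D|X rhs s w1' w2' Hin Drhs D]; subst.
    + destruct (IH _ D) as (w1 & w2 & -> & D1 & D2).
      exists (t :: w1), w2. repeat split; auto. now constructor.
    + destruct (IH _ D) as (w3 & w4 & -> & D1 & D2).
      exists (w1' ++ w3), w4. rewrite app_assoc. repeat split; auto. econstructor; eauto.
Qed.

Lemma derives_app3_inv s1 s2 s3 w : derives G (s1 ++ s2 ++ s3) w ->
  exists w1 w2 w3, w = w1 ++ w2 ++ w3 /\ derives G s1 w1 /\ derives G s2 w2 /\ derives G s3 w3.
Proof.
  intros H. apply derives_app_inv in H as (w1 & w' & -> & D1 & D').
  apply derives_app_inv in D' as (w2 & w3 & -> & D2 & D3). exists w1, w2, w3. auto.
Qed.

Lemma derives_prod X rhs w : In (X, rhs) prods -> derives G rhs w -> derives G [N X] w.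
Proof. intros. rewrite <- (app_nil_r w). econstructor; eauto. constructor. Qed.

Lemma derives_letter x : derives G [inr x] [x].
Proof. repeat constructor. Qed.

(** Exchange of each nonterminal with its mirror image; the sentential form
    [rev (map mirror s)] derives the reversals of the words derived from [s]. *)
Definition mirror (x : sym) : sym :=
  match x with
  | inl 1 => inl 3 | inl 3 => inl 1 | inl 2 => inl 4 | inl 4 => inl 2 | _ => x
  end.

Definition zmid (j : nat) : word := repeat gb j ++ gc :: ga :: repeat gb j.

Lemma zmid_S j : zmid (S j) = [gb] ++ zmid j ++ [gb].
Proof.
  unfold zmid. change (repeat gb (S j)) with (gb :: repeat gb j) at 2.
  rewrite repeat_cons. now list_norm.
Qed.

Lemma relator_zmid j : relator j = [ga] ++ zmid j ++ [gc].
Proof. unfold relator, abic, zmid. now list_norm. Qed.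

(** [slots s] = [E t1 E t2 ... E tn E] for [s = t1 ... tn]; its derivations are
    the paddings of [s]. *)
Fixpoint slots (s : word) : list sym :=
  match s with [] => [N 1] | t :: s' => N 1 :: T t :: slots s' end.

Lemma slots_snoc l x : slots (l ++ [x]) = slots l ++ [T x; N 1].
Proof. induction l as [|t l IH]; simpl; auto. now rewrite IH. Qed.

Lemma slots_relator j : slots (relator j) = [N 1; T ga] ++ slots (zmid j) ++ [T gc; N 1].
Proof. rewrite relator_zmid, app_assoc, slots_snoc. reflexivity. Qed.

Lemma slots_zmid_S j : slots (zmid (S j)) = [N 1; T gb] ++ slots (zmid j) ++ [T gb; N 1].
Proof. rewrite zmid_S, app_assoc, slots_snoc. reflexivity. Qed.

Lemma zmid_slots_derive j u : 1 <= j -> derives G (slots (zmid j)) u -> derives G [N 2] u.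
Proof.
  revert u. induction j as [|[|j] IH]; intros u Hj D; [lia| |].
  - apply derives_prod with (rhs := [N 1; T gb; N 1; T gc; N 1; T ga; N 1; T gb; N 1]);
      [simpl; tauto | exact D].
  - rewrite slots_zmid_S in D. apply derives_app3_inv in D as (w1 & w2 & w3 & -> & D1 & D2 & D3).
    apply derives_prod with (rhs := [N 1; T gb] ++ [N 2] ++ [T gb; N 1]); [simpl; tauto|].
    repeat apply derives_app; auto. apply IH; auto. lia.
Qed.

Lemma zmid_slots_derive_mirror j u : 1 <= j ->
  derives G (rev (map mirror (slots (zmid j)))) u -> derives G [N 4] u.
Proof.
  revert u. induction j as [|[|j] IH]; intros u Hj D; [lia| |].
  - apply derives_prod with (rhs := [N 3; T gb; N 3; T ga; N 3; T gc; N 3; T gb; N 3]);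
      [simpl; tauto | exact D].
  - rewrite slots_zmid_S, !map_app, !rev_app_distr, <- app_assoc in D.
    apply derives_app3_inv in D as (w1 & w2 & w3 & -> & D1 & D2 & D3).
    apply derives_prod with (rhs := [N 3; T gb] ++ [N 4] ++ [T gb; N 3]); [simpl; tauto|].
    repeat apply derives_app; auto. apply IH; auto. lia.
Qed.

Lemma relator_block_derive j w1 w2 : 1 <= j ->
  derives G (slots (relator j)) w1 -> derives G [N 1] w2 -> derives G [N 1] (w1 ++ w2).
Proof.
  intros Hj D1 D2. rewrite slots_relator in D1.
  apply derives_app3_inv in D1 as (x1 & x2 & x3 & -> & Dx1 & Dx2 & Dx3).
  apply zmid_slots_derive in Dx2; auto.
  apply derives_prod with (rhs := [N 1; T ga] ++ [N 2] ++ [T gc; N 1] ++ [N 1]);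
    [simpl; tauto|].
  rewrite <- !app_assoc. repeat apply derives_app; auto.
Qed.

Lemma relator_block_derive_mirror j w1 w2 : 1 <= j ->
  derives G (rev (map mirror (slots (relator j)))) w1 -> derives G [N 3] w2 ->
  derives G [N 3] (w2 ++ w1).
Proof.
  intros Hj D1 D2. rewrite slots_relator, !map_app, !rev_app_distr, <- app_assoc in D1.
  apply derives_app3_inv in D1 as (x1 & x2 & x3 & -> & Dx1 & Dx2 & Dx3).
  apply zmid_slots_derive_mirror in Dx2; auto.
  apply derives_prod with (rhs := [N 3] ++ [N 3; T gc] ++ [N 4] ++ [T ga; N 3]);
    [simpl; tauto|].
  repeat apply derives_app; auto.
Qed.

Lemma balanced_padding_derive :
  (forall w, balanced w -> derives G [N 1] (map Some w) /\ derives G [N 3] (map Some (rev w))) /\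
  (forall s w, padding s w -> derives G (slots s) (map Some w) /\
                              derives G (rev (map mirror (slots s))) (map Some (rev w))).
Proof.
  apply balanced_padding_ind.
  - split; apply derives_prod with (rhs := []); [simpl; tauto | constructor | simpl; tauto | constructor].
  - intros j w1 w2 Hj _ [D1 D1'] _ [D2 D2']. rewrite rev_app_distr, !map_app.
    split; [apply (relator_block_derive j) | apply (relator_block_derive_mirror j)]; auto.
  - intros e _ D. exact D.
  - intros t s e w _ [De De'] _ [Ds Ds']. rewrite rev_app_distr, !map_app. simpl.
    rewrite map_app. simpl. split.
    + apply (derives_app [N 1]); auto. apply (derives_app [T t] _ [Some t]); auto.
      apply derives_letter.
    + apply derives_app; [apply derives_app|]; auto. apply derives_letter.
Qed.

Lemma common_padding_derive z u v : padding z u -> padding z v ->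
  derives G [N 0] (map Some u ++ None :: map Some (rev v)).
Proof.
  destruct balanced_padding_derive as [DE _].
  revert u v. induction z as [|t z IH]; intros u v Hu Hv;
    inversion Hu as [e He|? ? e w He Hw]; inversion Hv as [e' He'|? ? e' w' He' Hw']; subst.
  - apply derives_prod with (rhs := [N 1] ++ [hash] ++ [N 3]); [simpl; tauto|].
    apply derives_app; [apply DE; auto|]. apply (derives_app [hash] _ [None]).
    + apply derives_letter.
    + apply DE; auto.
  - apply derives_prod with (rhs := [N 1] ++ [T t] ++ [N 0] ++ [T t] ++ [N 3]);
      [destruct t; simpl; tauto|].
    replace (map Some (e ++ t :: w) ++ None :: map Some (rev (e' ++ t :: w')))
      with (map Some e ++ [Some t] ++ (map Some w ++ None :: map Some (rev w'))
            ++ [Some t] ++ map Some (rev e'))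
      by (rewrite !map_app, !rev_app_distr; simpl; rewrite !map_app; now list_norm).
    apply derives_app; [apply DE; auto|]. apply derives_app; [apply derives_letter|].
    apply derives_app; [apply IH; auto|]. apply derives_app; [apply derives_letter|].
    apply DE; auto.
Qed.

Definition meaning (x : sym) (w : list (option gen)) : Prop :=
  match x with
  | inr t => w = [t]
  | inl 0 => pi2_word_problem w
  | inl 1 => exists u, w = map Some u /\ pi2_eq u []
  | inl 2 => exists j u, 1 <= j /\ w = map Some u /\ pi2_eq u (zmid j)
  | inl 3 => exists u, w = map Some (rev u) /\ pi2_eq u []
  | inl 4 => exists j u, 1 <= j /\ w = map Some (rev u) /\ pi2_eq u (zmid j)
  | inl _ => False
  end.

Fixpoint meanings (s : list sym) (w : list (option gen)) : Prop :=
  match s with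
  | [] => w = []
  | x :: s' => exists w1 w2, w = w1 ++ w2 /\ meaning x w1 /\ meanings s' w2
  end.

Ltac pi2_congr := repeat first [ assumption | apply pi2_refl | apply pi2_eq_cons | apply pi2_eq_app ].

Ltac list_eq := repeat progress (simpl; rewrite ?map_app, ?rev_app_distr, ?app_nil_r);
  repeat (rewrite <- app_assoc; simpl); reflexivity.

Ltac destruct_meanings := repeat match goal with
  | H : meanings (_ :: _) _ |- _ =>
      let w1 := fresh "w" in let w2 := fresh "w" in let Hx := fresh "Hx" in
      destruct H as (w1 & w2 & -> & Hx & H); simpl in Hx
  | H : meanings [] _ |- _ => simpl in H; subst
  | H : pi2_word_problem _ |- _ => destruct H as (? & ? & -> & ?)
  | H : exists _, _ |- _ => destruct H
  | H : _ /\ _ |- _ => destruct H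
  end; subst.

Lemma pi2_eq_wrap e e' g u v :
  pi2_eq e [] -> pi2_eq e' [] -> pi2_eq u v -> pi2_eq (e ++ g :: u) (e' ++ g :: v).
Proof.
  intros He He' Huv. apply pi2_trans with ([] ++ g :: u); [pi2_congr|].
  apply pi2_trans with ([] ++ g :: v); [pi2_congr|]. apply pi2_sym. pi2_congr.
Qed.

Lemma production_sound X rhs w : In (X, rhs) prods -> meanings rhs w -> meaning (inl X) w.
Proof.
  intros Hin Hs. simpl in Hin.
  repeat destruct Hin as [Hin|Hin]; try contradiction; inversion Hin; subst; clear Hin;
    destruct_meanings; simpl.
  - exists x0, x. split; [list_eq|]. apply pi2_trans with []; auto. now apply pi2_sym.
  - exists (x2 ++ ga :: x), (x1 ++ ga :: x0). split; [list_eq|]. now apply pi2_eq_wrap.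
  - exists (x2 ++ gb :: x), (x1 ++ gb :: x0). split; [list_eq|]. now apply pi2_eq_wrap.
  - exists (x2 ++ gc :: x), (x1 ++ gc :: x0). split; [list_eq|]. now apply pi2_eq_wrap.
  - exists []. split; auto. apply pi2_refl.
  - exists (x3 ++ ga :: x2 ++ gc :: x0 ++ x). split; [list_eq|].
    apply pi2_trans with (relator x1); [|now apply relator_trivial]. rewrite relator_zmid.
    replace ([ga] ++ zmid x1 ++ [gc]) with ([] ++ ga :: zmid x1 ++ gc :: [] ++ []) by list_eq.
    pi2_congr.
  - exists (S x0), (x2 ++ gb :: x1 ++ gb :: x). split; [lia|]. split; [list_eq|].
    rewrite zmid_S. replace ([gb] ++ zmid x0 ++ [gb]) with ([] ++ gb :: zmid x0 ++ gb :: [])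
      by list_eq. pi2_congr.
  - exists 1, (x3 ++ gb :: x2 ++ gc :: x1 ++ ga :: x0 ++ gb :: x). split; [lia|].
    split; [list_eq|].
    change (zmid 1) with ([] ++ gb :: [] ++ gc :: [] ++ ga :: [] ++ gb :: []). pi2_congr.
  - exists []. split; auto. apply pi2_refl.
  - exists (x ++ ga :: x1 ++ gc :: x2 ++ x3). split; [list_eq|].
    apply pi2_trans with (relator x0); [|now apply relator_trivial]. rewrite relator_zmid.
    replace ([ga] ++ zmid x0 ++ [gc]) with ([] ++ ga :: zmid x0 ++ gc :: [] ++ []) by list_eq.
    pi2_congr.
  - exists (S x0), (x ++ gb :: x1 ++ gb :: x2). split; [lia|]. split; [list_eq|].
    rewrite zmid_S. replace ([gb] ++ zmid x0 ++ [gb]) with ([] ++ gb :: zmid x0 ++ gb :: [])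
      by list_eq. pi2_congr.
  - exists 1, (x ++ gb :: x0 ++ gc :: x1 ++ ga :: x2 ++ gb :: x3). split; [lia|].
    split; [list_eq|].
    change (zmid 1) with ([] ++ gb :: [] ++ gc :: [] ++ ga :: [] ++ gb :: []). pi2_congr.
Qed.

Lemma derives_meanings s w : derives G s w -> meanings s w.
Proof.
  induction 1; simpl.
  - reflexivity.
  - exists [t], w. auto.
  - exists w1, w2. split; auto. split; auto. eapply production_sound; eauto.
Qed.

Theorem word_problem_context_free : context_free pi2_word_problem.
Proof.
  exists G. intro w. split.
  - intros (u & v & -> & Huv). apply common_padding_derive with (z := nf u).
    + apply padding_nf.
    + rewrite (nf_invariant _ _ Huv). apply padding_nf.
  - intros H. apply derives_meanings in H as (w1 & w2 & -> & Hw & ->).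
    now rewrite app_nil_r.
Qed.

(** * The group of units is not finitely generated *)

Definition relator_prefix (p : word) : Prop :=
  exists s j, 1 <= j /\ p ++ s = relator j /\ p <> [] /\ s <> [].

Definition relator_suffix (s : word) : Prop :=
  exists p j, 1 <= j /\ p ++ s = relator j /\ p <> [] /\ s <> [].

Inductive product_of (P : word -> Prop) : word -> Prop :=
| product_nil : product_of P []
| product_cons x z : P x -> product_of P z -> product_of P (x ++ z).

Lemma product_of_snoc (P : word -> Prop) z x : product_of P z -> P x -> product_of P (z ++ x).
Proof.
  induction 1 as [|y z Hy _ IH]; intros Hx.
  - simpl. rewrite <- (app_nil_r x). apply product_cons; [exact Hx | constructor].
  - rewrite <- app_assoc. constructor; auto.
Qed.

(** Reading an irreducible word [v] on a stack [rs0]: every reduction pops a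
    relator made of a prefix lying on the stack and a suffix coming from [v]. *)
Lemma read_irreducible v : irreducible v -> forall rs0, exists h t M rs1,
  v = h ++ t /\ rev rs0 = rev rs1 ++ M /\
  product_of relator_prefix M /\ product_of relator_suffix h /\
  fold_left push v rs0 = rev t ++ rs1.
Proof.
  induction v as [|x v IH] using rev_ind; intros Hirr rs0.
  - exists [], [], [], rs0. repeat split; try constructor. now rewrite app_nil_r.
  - destruct (IH (irreducible_prefix _ _ Hirr) rs0) as (h & t & M & rs1 & -> & Hrs & HM & Hh & Hf).
    rewrite fold_left_app, Hf. simpl.
    assert (Hkeep : exists h' t' M' rs1', (h ++ t) ++ [x] = h' ++ t' /\ rev rs0 = rev rs1' ++ M' /\
       product_of relator_prefix M' /\ product_of relator_suffix h' /\
       x :: rev t ++ rs1 = rev t' ++ rs1').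
    { exists h, (t ++ [x]), M, rs1. rewrite rev_app_distr, <- app_assoc. auto. }
    unfold push. destruct x; auto.
    destruct (pop_relator (rev t ++ rs1)) as [r|] eqn:E; auto.
    apply pop_relator_spec in E as (j & Hj & E).
    assert (Heq : rev rs1 ++ (t ++ [gc]) = rev r ++ relator j).
    { rewrite relator_split, (app_assoc (rev r)), <- rev_relator_on_stack, <- E.
      rewrite rev_app_distr, rev_involutive. now rewrite <- app_assoc. }
    apply app_eq_app in Heq as [l [[Hrs1 Hrel]|[Hr Hrel]]].
    + destruct l as [|y l].
      * exfalso. apply (Hirr h [] j Hj). simpl in Hrel. rewrite Hrel, app_nil_r.
        now rewrite <- app_assoc.
      * exists (h ++ t ++ [gc]), [], ((y :: l) ++ M), r. rewrite app_nil_r.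
        repeat split.
        -- now rewrite <- app_assoc.
        -- now rewrite Hrs, Hrs1, app_assoc.
        -- constructor; auto. exists (t ++ [gc]), j. repeat split; auto.
           discriminate. destruct t; discriminate.
        -- apply product_of_snoc; auto. exists (y :: l), j. repeat split; auto.
           discriminate. destruct t; discriminate.
    + exfalso. apply (Hirr (h ++ l) [] j Hj).
      now rewrite app_nil_r, <- !app_assoc, <- Hrel.
Qed.

Lemma left_invertible_suffixes w x : pi2_eq (w ++ x) [] -> product_of relator_suffix (nf x).
Proof.
  intros Hwx.
  assert (E : stack_of (w ++ nf x) = []).
  { apply rev_inj. fold (nf (w ++ nf x)). rewrite (nf_invariant _ (w ++ x)).
    - now rewrite (nf_invariant _ _ Hwx).
    - apply pi2_eq_app; [apply pi2_refl | apply pi2_sym, pi2_eq_nf]. }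
  destruct (read_irreducible (nf x) (nf_irreducible x) (stack_of w))
    as (h & t & M & rs1 & Hx & _ & _ & Hh & Hf).
  rewrite stack_of_app, Hf in E. apply app_eq_nil in E as [Et _].
  replace t with (@nil gen) in Hx by (apply rev_inj; now rewrite Et).
  rewrite Hx, app_nil_r. exact Hh.
Qed.

Lemma right_invertible_prefixes x w : pi2_eq (x ++ w) [] -> product_of relator_prefix (nf x).
Proof.
  intros Hxw.
  assert (E : stack_of (nf x ++ nf w) = []).
  { apply rev_inj. fold (nf (nf x ++ nf w)). rewrite (nf_invariant _ (x ++ w)).
    - now rewrite (nf_invariant _ _ Hxw).
    - apply pi2_eq_app; apply pi2_sym, pi2_eq_nf. }
  destruct (read_irreducible (nf w) (nf_irreducible w) (stack_of (nf x)))
    as (h & t & M & rs1 & _ & Hrs & HM & _ & Hf).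
  rewrite stack_of_app, Hf in E. apply app_eq_nil in E as [_ ->].
  fold (nf (nf x)) in Hrs. rewrite nf_idempotent in Hrs. rewrite Hrs. exact HM.
Qed.

Definition blocks (js : list nat) : word := concat (map abic js).

Lemma blocks_cons j js : blocks (j :: js) = abic j ++ blocks js.
Proof. reflexivity. Qed.

Lemma blocks_app js js' : blocks (js ++ js') = blocks js ++ blocks js'.
Proof. unfold blocks. now rewrite map_app, concat_app. Qed.

Lemma relator_prefix_head p : relator_prefix p -> exists p', p = ga :: p'.
Proof.
  intros (s & j & _ & E & Hp & _). destruct p as [|x p]; [contradiction|].
  unfold relator, abic in E. simpl in E. inversion E. eauto.
Qed.

Lemma product_prefixes_head z : product_of relator_prefix z -> z = [] \/ exists z', z = ga :: z'.
Proof.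
  destruct 1 as [|p z Hp _]; auto.
  right. destruct (relator_prefix_head p Hp) as [p' ->]. now exists (p' ++ z).
Qed.

Lemma single_occurrence (x : gen) l1 r1 l2 r2 :
  l1 ++ x :: r1 = l2 ++ x :: r2 -> ~ In x l2 -> ~ In x r2 -> r1 = r2.
Proof.
  intros E Hl Hr. apply app_eq_app in E as [[|y l] [[-> E]|[-> E]]]; inversion E; subst; auto.
  - exfalso. apply Hr, in_elt.
  - exfalso. apply Hl, in_elt.
Qed.

Lemma relator_suffix_block s : relator_suffix (ga :: s) -> exists j, 1 <= j /\ ga :: s = abic j.
Proof.
  intros (p & j & Hj & E & Hp & _). exists j. split; auto.
  destruct p as [|x p]; [contradiction|].
  assert (Hfree : ~ In ga (repeat gb j ++ [gc])).
  { intros Hin. apply in_app_or in Hin as [Hin|[Hin|[]]]; [|discriminate].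
    apply repeat_spec in Hin. discriminate. }
  unfold relator in E. rewrite (abic_app j (abic j)) in E. inversion E as [[Hx E']].
  change (abic j) with (ga :: repeat gb j ++ [gc]) in E'.
  replace (repeat gb j ++ gc :: ga :: repeat gb j ++ [gc])
    with ((repeat gb j ++ [gc]) ++ ga :: repeat gb j ++ [gc]) in E' by now rewrite <- app_assoc.
  apply single_occurrence in E'; auto. now rewrite E'.
Qed.

Lemma prefix_of_b_power q l n : q ++ l = repeat gb n ++ [gc] -> l <> [] -> q = repeat gb (length q).
Proof.
  revert n. induction q as [|x q IH]; intros n E Hl; [reflexivity|].
  destruct n as [|n]; simpl in E; inversion E as [[Hx E']]; subst.
  - apply app_eq_nil in E' as [_ ->]. contradiction.
  - simpl. f_equal. exact (IH n E' Hl).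
Qed.

Lemma b_power_mismatch i j r r' : repeat gb i ++ r = repeat gb j ++ gc :: r' ->
  r = [] \/ (exists r0, r = ga :: r0) -> False.
Proof.
  revert j. induction i as [|i IH]; intros [|j] E Hr; simpl in E;
    try (destruct Hr as [->|[r0 ->]]; discriminate).
  inversion E. eauto.
Qed.

Lemma prefixes_after_block j rest :
  product_of relator_prefix (abic j ++ rest) -> product_of relator_prefix rest.
Proof.
  intros H. remember (abic j ++ rest) as z eqn:Heq.
  destruct H as [|p rest' Hp Hrest]; [rewrite abic_app in Heq; discriminate|].
  destruct Hp as (s & j' & Hj' & Hps & Hp & Hs).
  unfold relator in Hps. apply app_eq_app in Hps as [l [[-> Hl]|[Habic ->]]].
  - (* the prefix covers the first block of its relator *)
    rewrite <- app_assoc in Heq. apply abic_prefix_inj in Heq as [-> <-].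
    destruct l as [|y l]; [exact Hrest|]. constructor; auto.
    exists (s ++ abic j), j. repeat split; auto; try discriminate.
    + unfold relator. now rewrite Hl, <- app_assoc.
    + destruct s; discriminate.
  - (* the prefix lies inside the first block of its relator *)
    destruct l as [|y l].
    + rewrite app_nil_r in Habic. subst p.
      apply abic_prefix_inj in Heq as [_ <-]. exact Hrest.
    + exfalso. destruct p as [|x q]; [contradiction|].
      change (abic j') with (ga :: repeat gb j' ++ [gc]) in Habic.
      inversion Habic as [[Hx Hq]]; subst x. symmetry in Hq.
      apply prefix_of_b_power in Hq; [|discriminate].
      rewrite abic_app in Heq. inversion Heq as [Heq'].
      rewrite Hq in Heq'. apply (b_power_mismatch _ _ _ _ Heq').
      now apply product_prefixes_head.
Qed.

Lemma suffixes_prefixes_blocks z : product_of relator_suffix z -> product_of relator_prefix z ->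
  exists js, Forall (fun j => 1 <= j) js /\ z = blocks js.
Proof.
  induction 1 as [|s rest Hs _ IH]; intros HP.
  - now exists [].
  - destruct s as [|x s]; [destruct Hs as (? & ? & ? & ? & ? & []); reflexivity|].
    destruct (product_prefixes_head _ HP) as [E|[z' E]]; [discriminate|].
    inversion E; subst x.
    destruct (relator_suffix_block s Hs) as (j & Hj & Ej). rewrite Ej in HP |- *.
    destruct (IH (prefixes_after_block j rest HP)) as (js & F & ->).
    exists (j :: js). split; [constructor; auto | reflexivity].
Qed.

Lemma unit_nf_blocks x : pi2_unit x -> exists js, Forall (fun j => 1 <= j) js /\ nf x = blocks js.
Proof.
  intros [[w Hl] [w' Hr]]. apply suffixes_prefixes_blocks.
  - exact (left_invertible_suffixes w x Hl).
  - exact (right_invertible_prefixes x w' Hr).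
Qed.

Definition bounded (N : nat) (js : list nat) : Prop := Forall (fun j => 1 <= j < N) js.

Lemma in_blocks_length j js : In j js -> j + 2 <= length (blocks js).
Proof.
  induction js as [|j' js IH]; intros H; [contradiction|].
  rewrite blocks_cons, length_app, length_abic.
  destruct H as [->|H]; [lia | specialize (IH H); lia].
Qed.

Lemma short_unit_blocks N s : pi2_unit s -> length s < N ->
  exists js, bounded N js /\ pi2_eq s (blocks js).
Proof.
  intros Hs Hlen. destruct (unit_nf_blocks s Hs) as (js & F & E). exists js. split.
  - apply Forall_forall. intros j Hj. split; [exact (proj1 (Forall_forall _ _) F j Hj)|].
    pose proof (in_blocks_length j js Hj). pose proof (reduces_length _ _ (reduces_nf s)).
    rewrite E in *. lia.
  - rewrite <- E. apply pi2_eq_nf.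
Qed.

Lemma blocks_rev_inverse js : Forall (fun j => 1 <= j) js -> pi2_eq (blocks js ++ blocks (rev js)) [].
Proof.
  induction js as [|j js IH]; intros F; [apply pi2_refl|].
  inversion F as [|? ? Hj F']; subst. simpl rev. rewrite blocks_app, blocks_cons.
  change (blocks [j]) with (abic j ++ []). rewrite app_nil_r.
  replace ((abic j ++ blocks js) ++ blocks (rev js) ++ abic j)
    with (abic j ++ (blocks js ++ blocks (rev js)) ++ abic j) by now rewrite <- !app_assoc.
  apply pi2_trans with (abic j ++ [] ++ abic j).
  - apply pi2_eq_context, IH, F'.
  - now apply relator_trivial.
Qed.

Lemma inverse_of_blocks s w js : Forall (fun j => 1 <= j) js -> pi2_eq s (blocks js) ->
  pi2_eq (w ++ s) [] -> pi2_eq w (blocks (rev js)).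
Proof.
  intros F Hs Hws. apply pi2_trans with (w ++ s ++ blocks (rev js)).
  - rewrite <- (app_nil_r w) at 1. apply pi2_eq_app; [apply pi2_refl|].
    apply pi2_sym, pi2_trans with (blocks js ++ blocks (rev js)).
    + apply pi2_eq_app; [exact Hs | apply pi2_refl].
    + now apply blocks_rev_inverse.
  - rewrite app_assoc. exact (pi2_eq_app _ [] _ _ Hws (pi2_refl _)).
Qed.

Lemma generated_bounded (gens : list word) N :
  (forall s, In s gens -> pi2_unit s) -> (forall s, In s gens -> length s < N) ->
  forall ws, (forall w, In w ws -> In w gens \/ inverse_of_some gens w) ->
  exists js, bounded N js /\ pi2_eq (concat ws) (blocks js).
Proof.
  intros Hunit Hshort. induction ws as [|w ws IH]; intros Hws.
  - exists []. split; [constructor | apply pi2_refl].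
  - assert (Hw : exists js, bounded N js /\ pi2_eq w (blocks js)).
    { destruct (Hws w (or_introl eq_refl)) as [Hin|(s & Hin & _ & Hws')].
      - exact (short_unit_blocks N w (Hunit w Hin) (Hshort w Hin)).
      - destruct (short_unit_blocks N s (Hunit s Hin) (Hshort s Hin)) as (js & F & Hs).
        exists (rev js). split; [now apply Forall_rev|].
        apply (inverse_of_blocks s); auto.
        eapply Forall_impl; [|exact F]. simpl. lia. }
    destruct Hw as (js1 & F1 & E1).
    destruct IH as (js2 & F2 & E2); [intros; apply Hws; now right|].
    exists (js1 ++ js2). split; [now apply Forall_app|].
    rewrite blocks_app. simpl. now apply pi2_eq_app.
Qed.

Lemma nf_abic j : 1 <= j -> nf (abic j) = abic j.
Proof.
  intros Hj. unfold nf, stack_of. rewrite push_abic.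
  destruct (pop_relator (repeat gb j ++ [ga])) eqn:E.
  - apply pop_after_abic in E. discriminate.
  - unfold abic. now list_norm.
Qed.

(** Reading a product of blocks yields (the reversal of) a product of blocks of
    the same sizes: the machine only cancels adjacent equal blocks. *)
Lemma stack_of_blocks N js : bounded N js ->
  exists js', bounded N js' /\ stack_of (blocks js) = rev (blocks js').
Proof.
  induction js as [|j js IH] using rev_ind; intros F; [now exists []|].
  apply Forall_app in F as [F Fj]. inversion Fj as [|? ? Hj _]; subst.
  destruct (IH F) as (js' & F' & E).
  rewrite blocks_app, stack_of_app, E. change (blocks [j]) with (abic j ++ []).
  rewrite app_nil_r, push_abic.
  destruct (pop_relator (repeat gb j ++ ga :: rev (blocks js'))) as [r|] eqn:P.
  - (* the new block cancels the last block of [js'] *)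
    apply pop_after_abic in P.
    assert (Hlast : blocks js' = rev r ++ abic j).
    { apply rev_inj. rewrite P, rev_app_abic. now rewrite rev_involutive. }
    destruct js' as [|j' js''] using rev_ind.
    + symmetry in Hlast. apply app_eq_nil in Hlast as [_ Hnil].
      rewrite <- (app_nil_r (abic j)), abic_app in Hnil. discriminate.
    + clear IHjs''. rewrite blocks_app in Hlast. change (blocks [j']) with (abic j' ++ []) in Hlast.
      rewrite app_nil_r in Hlast. apply abic_suffix_inj in Hlast as [Hr ->].
      apply Forall_app in F' as [F'' _]. exists js''. split; auto.
      now rewrite Hr, rev_involutive.
  - exists (js' ++ [j]). split; [now apply Forall_app|].
    rewrite blocks_app. change (blocks [j]) with (abic j ++ []).
    rewrite app_nil_r, rev_app_abic. reflexivity.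
Qed.

Lemma abic_not_bounded_product N js : 1 <= N -> bounded N js -> ~ pi2_eq (abic N) (blocks js).
Proof.
  intros HN F E. apply nf_invariant in E. rewrite nf_abic in E by exact HN.
  destruct (stack_of_blocks N js F) as (js' & F' & E').
  unfold nf in E. rewrite E', rev_involutive in E.
  destruct js' as [|j js']; [destruct N; discriminate|].
  rewrite blocks_cons, <- (app_nil_r (abic N)) in E.
  apply abic_prefix_inj in E as [<- _]. inversion F'. lia.
Qed.

Theorem units_not_finitely_generated : ~ pi2_units_fin_gen.
Proof.
  intros (gens & Hunit & Hgen).
  set (N := S (list_max (map (@length gen) gens))).
  assert (Hshort : forall s, In s gens -> length s < N).
  { intros s Hs.
    pose proof (proj1 (list_max_le (map (@length gen) gens) _) (le_n _)) as Hmax.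
    rewrite Forall_forall in Hmax. specialize (Hmax _ (in_map _ _ _ Hs)). unfold N. lia. }
  assert (Habic : pi2_unit (abic N)) by (split; exists (abic N); apply relator_trivial; lia).
  destruct (Hgen _ Habic) as (ws & Hws & Hx).
  destruct (generated_bounded gens N Hunit Hshort ws Hws) as (js & F & E).
  apply (abic_not_bounded_product N js); [lia | exact F | eapply pi2_trans; eauto].
Qed.

Theorem mainTheorem10 :
  context_free pi2_word_problem /\ ~ pi2_units_fin_gen.
Proof.
  split.
  - exact word_problem_context_free.
  - exact units_not_finitely_generated.
Qed.
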